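(* Let $\mathcal{G}=\{(P,\lambda)\in\mathsf{Sp}(n-1,\omega)\times\mathbb{R}_+:\dim\ker(P-\lambda\,\mathrm{Id})\leq1\}$ and $\mathcal{G}_1=\{(P,\lambda)\in\mathsf{Sp}(n-1,\omega)\times\mathbb{R}_+:\dim\ker(P-\lambda\,\mathrm{Id})=1\}$. Then the map $\chi\colon\mathcal{G}\to\mathbb{R}$, $\chi(P,\mu)=\det(P-\mu\,\mathrm{Id})$, is a submersion in a neighbourhood of $\mathcal{G}_1$.
   Context: $\omega$ is the standard symplectic form on $\mathbb{R}^{2(n-1)}$, $\mathsf{Sp}(n-1,\omega)$ the corresponding real symplectic group, $\mathbb{R}_+=(0,\infty)$. $\mathcal{G}$ is an open subset of the manifold $\mathsf{Sp}(n-1,\omega)\times\mathbb{R}_+$. *)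

From HB Require Import structures.
From mathcomp Require Import all_boot all_order all_algebra.
From mathcomp Require Import all_classical all_reals all_analysis.
Set Implicit Arguments. Unset Strict Implicit. Unset Printing Implicit Defensive.
Import Order.TTheory GRing.Theory Num.Theory.
Import numFieldNormedType.Exports.
Local Open Scope classical_set_scope.
Local Open Scope ring_scope.

(* Standard symplectic form on R^(k+k): omega(u,v) = u^T J v with
   J = [[0, Id], [-Id, 0]]. *)
Definition symJ (R : nzRingType) (k : nat) : 'M[R]_(k + k) :=
  block_mx 0 1%:M (- 1%:M) 0.

Definition symplectic (R : nzRingType) (k : nat) : set 'M[R]_(k + k) :=
  [set P | P^T *m symJ R k *m P = symJ R k].

Definition symp_tangent (R : nzRingType) (k : nat) (P : 'M[R]_(k + k))
  : set 'M[R]_(k + k) :=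
  [set X | X^T *m symJ R k *m P + P^T *m symJ R k *m X = 0].

Definition dimker (R : fieldType) (m : nat) (P : 'M[R]_m) (l : R) : nat :=
  \rank (kermx (P - l%:M)).

Definition setG (R : realType) (k : nat) : set ('M[R]_(k + k) * R) :=
  [set x | symplectic x.1 /\ 0 < x.2 /\ (dimker x.1 x.2 <= 1)%N].
Definition setG1 (R : realType) (k : nat) : set ('M[R]_(k + k) * R) :=
  [set x | symplectic x.1 /\ 0 < x.2 /\ dimker x.1 x.2 = 1%N].

Definition chi (R : realType) (m : nat) (x : 'M[R]_m * R) : R :=
  \det (x.1 - x.2%:M).

(* chi (restricted to the manifold Sp(k) x R_+) is a submersion at x:
   its differential T_x(Sp x R_+) -> R is surjective, i.e. some tangent
   vector (X, s) has nonzero derivative of chi along it. *)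
Definition chi_submersive_at (R : realType) (k : nat) (x : 'M[R]_(k + k) * R)
  : Prop :=
  exists (X : 'M[R]_(k + k)) (s : R),
    symp_tangent x.1 X /\
    derive1 (fun t : R => chi (x.1 + t *: X, x.2 + t * s)) 0 != 0.

From HB Require Import structures.
From mathcomp Require Import all_boot all_order all_algebra.
From mathcomp Require Import all_classical all_reals all_analysis.
From mathcomp Require Import perm zify.
Set Implicit Arguments. Unset Strict Implicit. Unset Printing Implicit Defensive.
Import Order.TTheory GRing.Theory Num.Theory.
Import numFieldNormedType.Exports.
Local Open Scope classical_set_scope.
Local Open Scope ring_scope.

(* At (P, mu) in G_1 the matrix M = P - mu Id has corank one, so Gaussian
   elimination writes M = L diag(1, ..., 1, 0) W with L, W invertible, and the
   derivative of det at M along X is det L * det W * (L^-1 X W^-1)_ll, where l is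
   the last index. The tangent vectors to Sp at P include P J S for every
   symmetric S; along them this derivative becomes a S b^T for two nonzero rows
   a, b, and S = a^T b + b^T a makes it |a|^2 |b|^2 + (a.b)^2 > 0. As the
   derivative along P J S depends continuously on (P, mu), the union over
   symmetric S of the loci where it is nonzero is an open neighbourhood of G_1
   on which chi is a submersion. *)

Section DetDerivative.
Variable R : numFieldType.

Lemma is_derive_affine (a b : R) :
  is_derive (0 : R) (1 : R) (fun t : R => a + t * b) b.
Proof.
have := is_deriveD (is_derive_cst a (0 : R) (1 : R))
  (is_deriveM (is_derive_id (0 : R) 1) (is_derive_cst b (0 : R) (1 : R))).
by rewrite /= scaler0 !add0r [_ *: 1]mulr1.
Qed.

Lemma is_derive_unique (f : R -> R) (x v df df' : R) :
  is_derive x v f df -> is_derive x v f df' -> df = df'.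
Proof. by move=> [_ <-] [_ <-]. Qed.

Lemma is_derive_finsum (I : finType) (h : I -> R -> R) (dh : I -> R) x v :
  (forall i, is_derive x v (h i) (dh i)) ->
  is_derive x v (fun t => \sum_i h i t) (\sum_i dh i).
Proof.
move=> dh_h; rewrite -fct_sumE.
by elim/big_ind2 : _ => // *; [exact: is_derive_cst | exact: is_deriveD].
Qed.

Lemma is_derive_prod n (h : 'I_n -> R -> R) (dh : 'I_n -> R) x v :
  (forall i, is_derive x v (h i) (dh i)) ->
  is_derive x v (fun t => \prod_(i < n) h i t)
    (\sum_(i < n) \prod_(j < n) (if j == i then dh j else h j x)).
Proof.
elim: n h dh => [|n IHn] h dh dh_h.
  under eq_fun do rewrite big_ord0.
  by rewrite big_ord0; exact: is_derive_cst.
pose w := widen_ord (leqnSn n).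
have w_max j : (w j == ord_max) = false.
  by apply/negbTE; rewrite -val_eqE /= neq_ltn ltn_ord.
have w_inj (i j : 'I_n) :
    (widen_ord (leqnSn n) j == widen_ord (leqnSn n) i) = (j == i).
  by rewrite -val_eqE.
under eq_fun do rewrite big_ord_recr.
have dprod := is_deriveM (IHn (h \o w) (dh \o w) (fun i => dh_h (w i))) (dh_h ord_max).
apply: (is_derive_eq dprod).
rewrite big_ord_recr /= addrC; congr (_ + _).
  by rewrite big_ord_recr /= eqxx; under [in RHS]eq_bigr do rewrite w_max.
rewrite -[_ *: _]/(_ * _) mulr_sumr; apply: eq_bigr => i _.
by rewrite big_ord_recr /= eq_sym w_max mulrC; under [in RHS]eq_bigr do rewrite w_inj.
Qed.

Definition row_subst m (M Y : 'M[R]_m) (i : 'I_m) : 'M[R]_m :=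
  \matrix_(j, k) if j == i then Y j k else M j k.

Definition ddet m (M Y : 'M[R]_m) : R := \sum_i \det (row_subst M Y i).

Lemma is_derive_det m (M Y : 'M[R]_m) :
  is_derive (0 : R) (1 : R) (fun t : R => \det (M + t *: Y)) (ddet M Y).
Proof.
have -> : ddet M Y = \sum_(s : 'S_m) (-1) ^+ s *
    \sum_(i < m) \prod_(j < m) (if j == i then Y j (s j) else M j (s j)).
  rewrite /ddet exchange_big; apply: eq_bigr => s _ /=.
  rewrite mulr_sumr; apply: eq_bigr => i _; congr (_ * _).
  by apply: eq_bigr => j _; rewrite !mxE.
have -> : (fun t : R => \det (M + t *: Y)) = (fun t => \sum_(s : 'S_m)
    (-1) ^+ s * \prod_(i < m) (M i (s i) + t * Y i (s i))).
  apply/funext => t; apply: eq_bigr => s _; congr (_ * _).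
  by apply: eq_bigr => i _; rewrite !mxE.
apply: is_derive_finsum => s.
apply: (is_derive_eq (is_deriveZ ((-1) ^+ s)
  (is_derive_prod (fun j => is_derive_affine (M j (s j)) (Y j (s j)))))).
by under eq_bigr do under eq_bigr do rewrite mul0r addr0.
Qed.

Lemma ddet_mulmx m (L M W Z : 'M[R]_m) :
  ddet (L *m M *m W) (L *m Z *m W) = \det L * \det W * ddet M Z.
Proof.
have det_line : (fun t : R => \det (L *m M *m W + t *: (L *m Z *m W))) =
    (\det L * \det W) \*: (fun t : R => \det (M + t *: Z)).
  apply/funext => t /=.
  by rewrite scalemxAl scalemxAr -mulmxDl -mulmxDr !det_mulmx mulrAC.
have dM := is_deriveZ (\det L * \det W) (is_derive_det M Z).
rewrite -det_line in dM.
exact: is_derive_unique (is_derive_det _ _) dM.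
Qed.

Lemma ddet_pid m (Z : 'M[R]_m) (l : 'I_m) : l = m.-1 :> nat ->
  ddet (pid_mx m.-1) Z = Z l l.
Proof.
move=> l_last; rewrite /ddet (bigD1 l) //= big1 ?addr0 => [|i i_l].
  rewrite det_trig.
    rewrite (bigD1 l) //= mxE eqxx big1 ?mulr1 // => i i_l.
    rewrite !mxE (negbTE i_l) eqxx /=.
    suff -> : (i < m.-1)%N by [].
    by move: i_l; rewrite -val_eqE /= l_last; have := ltn_ord i; lia.
  apply/is_trig_mxP => i j lt_ij; rewrite !mxE (ltn_eqF lt_ij).
  suff /negbTE -> : i != l by [].
  by rewrite -val_eqE /= l_last; have := ltn_ord j; lia.
rewrite (expand_det_row _ l) big1 // => j _.
by rewrite !mxE eq_sym (negbTE i_l) l_last ltnn andbF mul0r.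
Qed.

Lemma ddet_corank1 m (M X : 'M[R]_m) (l : 'I_m) :
  \rank M = m.-1 -> l = m.-1 :> nat ->
  ddet M X = \det (col_ebase M) * \det (row_ebase M) *
    (invmx (col_ebase M) *m X *m invmx (row_ebase M)) l l.
Proof.
move=> rkM l_last; set L := col_ebase M; set W := row_ebase M.
have uL : L \in unitmx := col_ebase_unit M.
have uW : W \in unitmx := row_ebase_unit M.
set Z := invmx L *m X *m invmx W.
have eX : X = L *m Z *m W.
  by rewrite /Z !mulmxA mulmxV // mul1mx -mulmxA mulVmx // mulmx1.
by rewrite {1}eX -{1}(mulmx_ebase M) ddet_mulmx rkM (ddet_pid _ l_last).
Qed.

End DetDerivative.

Lemma derive1_chi (R : realType) m (P X : 'M[R]_m) (mu : R) :
  derive1 (fun t : R => chi (P + t *: X, mu + t * 0)) 0 = ddet (P - mu%:M) X.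
Proof.
under eq_fun do rewrite /chi /= mulr0 addr0 addrAC.
by rewrite derive1E; case: (is_derive_det (P - mu%:M) X).
Qed.

Lemma mxE_mul_row_col (F : pzSemiRingType) m n p (A : 'M[F]_(m, n))
    (B : 'M[F]_(n, p)) i j :
  (A *m B) i j = (row i A *m col j B) 0 0.
Proof. by rewrite !mxE; apply: eq_bigr => r _; rewrite !mxE. Qed.

Lemma row_unitmx_neq0 (F : comUnitRingType) n (A : 'M[F]_n) (i : 'I_n) :
  A \in unitmx -> row i A != 0.
Proof.
move=> uA; apply/eqP => Ai0.
have : (row i A *m invmx A) 0 i = 1 by rewrite -row_mul mulmxV // !mxE eqxx.
by rewrite Ai0 mul0mx mxE => /eqP; rewrite eq_sym oner_eq0.
Qed.

Section RowVectors.
Variable F : realFieldType.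


Lemma mulmx_tr_gt0 n (u : 'rV[F]_n) : u != 0 -> 0 < (u *m u^T) 0 0.
Proof.
move=> u_neq0; have [j uj_neq0] : exists j, u 0 j != 0.
  apply/existsP; apply: contraR u_neq0 => /existsPn u0.
  by apply/eqP/rowP => j; rewrite mxE; exact/eqP/negbNE/u0.
rewrite mxE (bigD1 j) //= mxE ltr_pwDl ?sumr_ge0 // => [|i _].
  by rewrite -expr2 exprn_even_gt0.
by rewrite mxE -expr2 sqr_ge0.
Qed.

(* [a S b^T = |a|^2 |b|^2 + (a . b)^2] for the symmetric [S = a^T b + b^T a]. *)
Lemma sym_outer_quad_gt0 n (a b : 'rV[F]_n) : a != 0 -> b != 0 ->
  0 < (a *m (a^T *m b + b^T *m a) *m b^T) 0 0.
Proof.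
move=> a_neq0 b_neq0.
have mul11 (u v : 'M[F]_1) : (u *m v) 0 0 = u 0 0 * v 0 0 by rewrite mxE big_ord1.
rewrite mulmxDr mulmxDl !mulmxA mxE -(mulmxA (a *m a^T)) -(mulmxA (a *m b^T)).
rewrite !mul11 ltr_wpDr ?mulr_gt0 ?mulmx_tr_gt0 //.
by rewrite -expr2 sqr_ge0.
Qed.

End RowVectors.

Section Continuity.
Variables (R : numFieldType) (T : topologicalType).

Lemma continuous_sum (I : finType) (h : I -> T -> R) :
  (forall i, continuous (h i)) -> continuous (fun y => \sum_i h i y).
Proof.
move=> h_cont.
by apply: continuous_big => [|i _]; [exact: add_continuous | exact: h_cont].
Qed.

Lemma continuous_prod (I : finType) (h : I -> T -> R) :
  (forall i, continuous (h i)) -> continuous (fun y => \prod_i h i y).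
Proof.
move=> h_cont.
by apply: continuous_big => [|i _]; [exact: mul_continuous | exact: h_cont].
Qed.

Lemma continuous_det m (f : T -> 'M[R]_m) :
  (forall i j, continuous (fun y => f y i j)) -> continuous (fun y => \det (f y)).
Proof.
move=> f_cont; apply: continuous_sum => s y.
apply: (@continuousM _ _ (cst _) (fun y => \prod_i f y i (s i))).
  exact: cst_continuous.
by apply: continuous_prod => i; exact: f_cont.
Qed.

Lemma continuous_mulmx m n p (f : T -> 'M[R]_(m, n)) (C : 'M[R]_(n, p)) :
  (forall i j, continuous (fun y => f y i j)) ->
  forall i j, continuous (fun y => (f y *m C) i j).
Proof.
move=> f_cont i j; under eq_fun do rewrite mxE.
apply: continuous_sum => l y.
apply: (@continuousM _ _ (fun y => f y i l) (cst _)); first exact: f_cont.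
exact: cst_continuous.
Qed.

End Continuity.

Section Symplectic.
Variables (R : realType) (k : nat).
Local Notation J := (symJ R k).

Lemma symJ_tr : J^T = - J.
Proof.
rewrite /symJ tr_block_mx opp_block_mx !trmx0 trmx1 oppr0 opprK.
by rewrite (_ : (- 1%:M)^T = - 1%:M) // linearN /= trmx1.
Qed.

Lemma symJ_sq : J *m J = - 1%:M.
Proof.
rewrite /symJ mulmx_block !mul0mx !mulmx0 !mul1mx !mulmx1 !addr0 !add0r.
by rewrite [in RHS](scalar_mx_block k k 1) opp_block_mx oppr0.
Qed.

Lemma symJ_unitmx : J \in unitmx.
Proof.
have : J *m (- J) = 1%:M by rewrite mulmxN symJ_sq opprK.
by case/mulmx1_unit.
Qed.

Lemma symplectic_unitmx (P : 'M[R]_(k + k)) : symplectic P -> P \in unitmx.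
Proof.
move=> sympP; have : (invmx J *m P^T *m J) *m P = 1%:M.
  by rewrite -!mulmxA (mulmxA P^T) sympP mulVmx // symJ_unitmx.
by case/mulmx1_unit.
Qed.

(* [J S] is a Hamiltonian matrix, i.e. tangent to Sp at the identity. *)
Lemma symp_tangent_sym (P S : 'M[R]_(k + k)) :
  symplectic P -> S^T = S -> symp_tangent P (P *m (J *m S)).
Proof.
rewrite /symplectic /symp_tangent /= => sympP symS.
rewrite trmx_mul -!mulmxA (mulmxA P^T) sympP trmx_mul symS symJ_tr.
rewrite !mulmxA sympP symJ_sq mulmxN mulNmx -mulmxA symJ_sq.
by rewrite mulmxN mulmx1 mulNmx mul1mx opprK subrr.
Qed.

End Symplectic.

Section SubmersionNeighbourhood.
Variables (R : realType) (k : nat).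
Local Notation J := (symJ R k).

Definition dchi (S : 'M[R]_(k + k)) (y : 'M[R]_(k + k) * R) : R :=
  ddet (y.1 - y.2%:M) (y.1 *m (J *m S)).

Definition submersion_nbhd : set ('M[R]_(k + k) * R) :=
  \bigcup_(S in [set S | S^T = S]) [set y | dchi S y != 0].

Lemma continuous_dchi S : continuous (dchi S).
Proof.
have fst_entry i j : continuous (fun y : 'M[R]_(k + k) * R => y.1 i j).
  move=> y; apply: (@continuous_comp _ _ _ fst (fun M : 'M[R]_(k + k) => M i j)).
    exact: cvg_fst.
  exact: coord_continuous.
apply: continuous_sum => i; apply: continuous_det => a b.
have -> : (fun y => row_subst (y.1 - y.2%:M) (y.1 *m (J *m S)) i a b) =
    (fun y => if a == i then (y.1 *m (J *m S)) a b else y.1 a b - y.2 * (a == b)%:R).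
  by apply/funext => y; rewrite !mxE mulr_natr.
case: (a == i); first exact: continuous_mulmx.
move=> y; apply: (@continuousB _ _ _ (fun y : 'M[R]_(k + k) * R => y.1 a b)
  (fun y : 'M[R]_(k + k) * R => y.2 * (a == b)%:R)).
  exact: fst_entry.
by apply: (@continuousM _ _ snd (cst _)); [exact: cvg_snd | exact: cst_continuous].
Qed.

Lemma open_submersion_nbhd : open submersion_nbhd.
Proof.
apply: bigcup_open => S _; apply: (@open_comp _ _ _ [set r : R | r != 0]).
  by move=> y _; exact: continuous_dchi.
exact: open_neq.
Qed.

Lemma setG1_sub_submersion_nbhd : @setG1 R k `<=` submersion_nbhd.
Proof.
move=> [P mu] [/= sympP [_]]; rewrite /dimker mxrank_ker.
set M := P - mu%:M => corank1.
have rkM : \rank M = (k + k).-1.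
  by move: corank1 (rank_leq_row M); rewrite -subn1; move: (\rank M); lia.
have l_lt : ((k + k).-1 < k + k)%N by rewrite ltn_predL; lia.
pose l := Ordinal l_lt; set L := col_ebase M; set W := row_ebase M.
pose a := row l (invmx L *m P *m J).
pose b := row l (invmx W)^T.
have a_neq0 : a != 0.
  apply: row_unitmx_neq0.
  by rewrite !unitmx_mul unitmx_inv col_ebase_unit symplectic_unitmx // symJ_unitmx.
have b_neq0 : b != 0.
  by apply: row_unitmx_neq0; rewrite unitmx_tr unitmx_inv row_ebase_unit.
exists (a^T *m b + b^T *m a); first by rewrite /= linearD /= !trmx_mul !trmxK addrC.
rewrite /dchi /= (ddet_corank1 (l := l) _ rkM erefl) -/M -/L -/W.
rewrite !mulmxA mxE_mul_row_col.
rewrite row_mul -[col _ _]trmxK tr_col -/a -/b.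
have detL_neq0 : \det L != 0 by rewrite -unitfE -unitmxE col_ebase_unit.
have detW_neq0 : \det W != 0 by rewrite -unitfE -unitmxE row_ebase_unit.
by rewrite !mulf_neq0 // lt0r_neq0 // sym_outer_quad_gt0.
Qed.

Lemma chi_submersive_nbhd x :
  submersion_nbhd x -> symplectic x.1 -> chi_submersive_at x.
Proof.
case: x => P mu [S symS dchi_neq0] /= sympP.
exists (P *m (J *m S)), 0; split; first exact: symp_tangent_sym.
by rewrite derive1_chi.
Qed.

End SubmersionNeighbourhood.

Theorem propositionA4 (R : realType) (n : nat) :
  exists U : set ('M[R]_(n.-1 + n.-1) * R),
    open U /\ @setG1 R n.-1 `<=` U /\
    (forall x, U x -> @setG R n.-1 x -> chi_submersive_at x).
Proof.
exists (@submersion_nbhd R n.-1); split; first exact: open_submersion_nbhd.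
split; first exact: setG1_sub_submersion_nbhd.
by move=> x Ux [sympP _]; exact: chi_submersive_nbhd.
Qed.
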